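(* Consider the local public good game described in the context and suppose Assumption 1 holds. Let $(x^*,y^*,g^* )$ be a Nash equilibrium and suppose there are players $i,j\in N$ with $x_i^*>k$ and $x_j^*>k$. Then $g_{ij}^*=1$.
   Context: There is a finite set of players $N=\{1,\dots,n\}$. Each player $i$ chooses a public good provision $x_i\ge 0$, a private good consumption $y_i\ge 0$, and links $g_i=(g_{i1},\dots,g_{in})\in\{0,1\}^n$ with $g_{ii}=0$; $g_{ij}=1$ means $i$ links to $j$. Let $N_i(g)=\{j:g_{ij}=1\}$ and $\eta_i(g)=|N_i(g)|$. Each link costs its sponsor $k>0$. Player $i$'s spillovers are $\bar x_{-i}=\sum_{j}g_{ij}x_j$ and her public good consumption is $\bar x_i=x_i+\bar x_{-i}$. Player $i$ maximizes $U_i(\bar x_i,y_i)$ subject to $x_i+p_iy_i+\eta_i(g)k=w_i$, where $w_i>0$, $p_i>0$, and $U_i$ is twice continuously differentiable, strictly concave and increasing in both arguments. The Engel curve $\gamma_i:\mathbb{R}\to\mathbb{R}$ gives, for income $W$, the public good consumption $\bar x$ maximizing $U_i(\bar x,y)$ subject to $\bar x+p_iy=W$; with net social income $\bar w_i(g)=w_i-\eta_i(g)k+\bar x_{-i}$, player $i$'s optimal provision is $x_i=\max\{\gamma_i(\bar w_i(g))-\bar x_{-i},0\}$. Assumption 1: for each $i$, $\gamma_i$ is continuously differentiable with $\gamma_i'(W)\in[0,1]$ for all $W$. A strategy profile $(x^*,y^*,g^* )$ is a Nash equilibrium if each player's strategy $(x_i^*,y_i^*,g_i^* )$ solves her maximization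 problem given the others' strategies. *)

From Stdlib Require Import Reals Lra List.
From Coquelicot Require Import Coquelicot.
Import ListNotations.
Open Scope R_scope.

Definition pd1 (f : R -> R -> R) : R -> R -> R :=
  fun a b => Derive (fun t => f t b) a.
Definition pd2 (f : R -> R -> R) : R -> R -> R :=
  fun a b => Derive (fun t => f a t) b.

Definition cont2 (f : R -> R -> R) : Prop :=
  forall a b : R, continuous (fun z : R * R => f (fst z) (snd z)) (a, b).

Definition has_partials (f : R -> R -> R) : Prop :=
  forall a b : R, ex_derive (fun t => f t b) a /\ ex_derive (fun t => f a t) b.

Definition C2_fun (f : R -> R -> R) : Prop :=
  has_partials f /\ has_partials (pd1 f) /\ has_partials (pd2 f) /\
  cont2 f /\ cont2 (pd1 f) /\ cont2 (pd2 f) /\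
  cont2 (pd1 (pd1 f)) /\ cont2 (pd2 (pd1 f)) /\
  cont2 (pd1 (pd2 f)) /\ cont2 (pd2 (pd2 f)).

Definition strictly_concave2 (f : R -> R -> R) : Prop :=
  forall a b c d t : R, (a, b) <> (c, d) -> 0 < t < 1 ->
    t * f a b + (1 - t) * f c d < f (t * a + (1 - t) * c) (t * b + (1 - t) * d).

Definition increasing2 (f : R -> R -> R) : Prop :=
  (forall a a' b, a < a' -> f a b < f a' b) /\
  (forall a b b', b < b' -> f a b < f a b').

(* gamma is the Engel curve of utility Ui at price pi: for each income W,
   gamma W is the public good consumption xbar maximizing Ui(xbar, y)
   subject to xbar + pi * y = W. *)
Definition engel_curve (Ui : R -> R -> R) (pi : R) (gamma : R -> R) : Prop :=
  forall W xb : R, Ui xb ((W - xb) / pi) <= Ui (gamma W) ((W - gamma W) / pi).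

Definition assumption1 (gamma : R -> R) : Prop :=
  (forall W, ex_derive gamma W) /\
  (forall W, continuous (Derive gamma) W) /\
  (forall W, 0 <= Derive gamma W <= 1).

(* Players are 0, ..., n-1.  A link vector of a player is gi : nat -> bool
   (gi j = true means the player links to j); only j < n are relevant. *)

Definition players (n : nat) : list nat := seq 0 n.

Definition nlinks (n : nat) (gi : nat -> bool) : R :=
  INR (length (filter gi (players n))).

Definition spill (n : nat) (gi : nat -> bool) (x : nat -> R) : R :=
  fold_right Rplus 0 (map (fun j => if gi j then x j else 0) (players n)).

Definition feasible (n : nat) (k : R) (w p : nat -> R) (i : nat)
    (xi yi : R) (gi : nat -> bool) : Prop :=
  0 <= xi /\ 0 <= yi /\ gi i = false /\
  xi + p i * yi + nlinks n gi * k = w i.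

Definition nash_eq (n : nat) (U : nat -> R -> R -> R) (k : R) (w p : nat -> R)
    (x y : nat -> R) (g : nat -> nat -> bool) : Prop :=
  forall i, (i < n)%nat ->
    feasible n k w p i (x i) (y i) (g i) /\
    forall xi yi gi, feasible n k w p i xi yi gi ->
      U i (xi + spill n gi x) yi <= U i (x i + spill n (g i) x) (y i).

(** If [i] does not link to [j] although [x_i > k] and [x_j > k], then [i] can
    cut her own provision by [k] to pay for a link to [j]: her private
    consumption is unchanged and her public good consumption rises by
    [x_j - k > 0], so she strictly gains because [U_i] is increasing. *)

From Stdlib Require Import Reals Lra Lia List.
From Coquelicot Require Import Coquelicot.
Open Scope R_scope.

Definition add_link (gi : nat -> bool) (j : nat) : nat -> bool :=
  fun m => (Nat.eqb m j || gi m)%bool.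

Lemma add_link_eq gi j : add_link gi j j = true.
Proof. unfold add_link. now rewrite Nat.eqb_refl. Qed.

Lemma add_link_neq gi j m : m <> j -> add_link gi j m = gi m.
Proof. intros Hmj. unfold add_link. now rewrite (proj2 (Nat.eqb_neq m j) Hmj). Qed.

Lemma filter_add_link_notin gi j l :
  ~ In j l -> filter (add_link gi j) l = filter gi l.
Proof.
  intros Hj. apply filter_ext_in. intros m Hm.
  apply add_link_neq. intros ->. contradiction.
Qed.

Lemma map_add_link_notin {A : Type} (f : bool -> nat -> A) gi j l :
  ~ In j l ->
  map (fun m => f (add_link gi j m) m) l = map (fun m => f (gi m) m) l.
Proof.
  intros Hj. apply map_ext_in. intros m Hm.
  rewrite add_link_neq; [reflexivity|]. intros ->. contradiction.
Qed.

Lemma length_filter_add_link gi j l :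
  gi j = false -> NoDup l -> In j l ->
  length (filter (add_link gi j) l) = S (length (filter gi l)).
Proof.
  intros Hgj Hnd. induction Hnd as [|a l Ha Hnd IH]; simpl; [contradiction|].
  intros [-> | Hin].
  - rewrite add_link_eq, Hgj, filter_add_link_notin by assumption. reflexivity.
  - rewrite add_link_neq by (intros ->; contradiction).
    destruct (gi a); simpl; rewrite IH; auto.
Qed.

Lemma sum_add_link gi j (x : nat -> R) l :
  gi j = false -> NoDup l -> In j l ->
  fold_right Rplus 0 (map (fun m => if add_link gi j m then x m else 0) l) =
  fold_right Rplus 0 (map (fun m => if gi m then x m else 0) l) + x j.
Proof.
  intros Hgj Hnd. induction Hnd as [|a l Ha Hnd IH]; simpl; [contradiction|].
  intros [-> | Hin].
  - rewrite add_link_eq, Hgj.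
    rewrite (map_add_link_notin (fun b m => if b then x m else 0)) by assumption.
    lra.
  - rewrite add_link_neq by (intros ->; contradiction).
    rewrite IH by assumption. lra.
Qed.

Lemma nlinks_add_link n gi j :
  gi j = false -> (j < n)%nat -> nlinks n (add_link gi j) = nlinks n gi + 1.
Proof.
  intros Hgj Hjn. unfold nlinks, players.
  rewrite length_filter_add_link by (auto using seq_NoDup; apply in_seq; lia).
  apply S_INR.
Qed.

Lemma spill_add_link n gi j x :
  gi j = false -> (j < n)%nat -> spill n (add_link gi j) x = spill n gi x + x j.
Proof.
  intros Hgj Hjn. unfold spill, players.
  apply sum_add_link; auto using seq_NoDup. apply in_seq. lia.
Qed.

Lemma feasible_add_link n k w p i xi yi gi j :
  feasible n k w p i xi yi gi -> i <> j -> (j < n)%nat -> gi j = false ->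
  k <= xi -> feasible n k w p i (xi - k) yi (add_link gi j).
Proof.
  intros (Hx & Hy & Hgii & Hbudget) Hij Hjn Hgj Hk.
  repeat split; try lra.
  - now rewrite add_link_neq.
  - rewrite nlinks_add_link by assumption. lra.
Qed.

Theorem lemma2 (n : nat) (U : nat -> R -> R -> R) (gamma : nat -> R -> R)
    (w p : nat -> R) (k : R)
    (Hk : 0 < k)
    (Hw : forall i, (i < n)%nat -> 0 < w i)
    (Hp : forall i, (i < n)%nat -> 0 < p i)
    (HU_C2 : forall i, (i < n)%nat -> C2_fun (U i))
    (HU_conc : forall i, (i < n)%nat -> strictly_concave2 (U i))
    (HU_incr : forall i, (i < n)%nat -> increasing2 (U i))
    (Hgamma : forall i, (i < n)%nat -> engel_curve (U i) (p i) (gamma i))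
    (HA1 : forall i, (i < n)%nat -> assumption1 (gamma i))
    (x y : nat -> R) (g : nat -> nat -> bool)
    (Hnash : nash_eq n U k w p x y g) :
  forall i j, (i < n)%nat -> (j < n)%nat -> i <> j ->
    k < x i -> k < x j -> g i j = true.
Proof.
  intros i j Hi Hj Hij Hxi Hxj.
  destruct (g i j) eqn:Hgij; [reflexivity | exfalso].
  destruct (Hnash i Hi) as [Hfeas Hbest].
  assert (Hdev := Hbest _ _ _
    (feasible_add_link _ _ _ _ _ _ _ _ _ Hfeas Hij Hj Hgij (Rlt_le _ _ Hxi))).
  rewrite spill_add_link in Hdev by assumption.
  destruct (HU_incr i Hi) as [Hincr _].
  assert (Hgain := Hincr (x i + spill n (g i) x)
                         (x i - k + (spill n (g i) x + x j)) (y i) ltac:(lra)).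
  lra.
Qed.
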